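(* Let $p_1,p_2,q$ be non-negative integers, $k$ an integer and $x_1,x_2\in\mathbb{C}$. Then $$\sum_{l=0}^{q}(-1)^{l}B^{(k)}_{p_1+l,p_2}(x_1,x_2)\,\frac{1}{l!}\frac{d^{l}}{dx_1^{l}}\prod_{i=0}^{q-1}(x_1+i)=\sum_{l=0}^{q}(-1)^{l}B^{(k)}_{p_1,p_2+l}(x_1,x_2)\,\frac{1}{l!}\frac{d^{l}}{dx_2^{l}}\prod_{i=0}^{q-1}(x_2+i)=\sum_{l=0}^{p_1+p_2}S_{1,x_1+q}^{1,x_2+q,p_2}(p_1,l)\frac{(-1)^{l}(l+q)!}{(l+q+1)^{k}}.$$ (Empty products equal $1$.)
   Context: For non-negative integers $p_1,p_2,l$ and $x_1,x_2\in\mathbb{C}$, the generalized Stirling numbers are $$S_{1,x_1}^{1,x_2,p_2}(p_1,l)=\frac{1}{l!}\sum_{j=0}^{l}(-1)^{j}\binom{l}{j}(l-j+x_1)^{p_1}(l-j+x_2)^{p_2}.$$ For an integer $k$, the bi-variate poly-Bernoulli polynomial is $$B^{(k)}_{p_1,p_2}(x_1,x_2)=\sum_{l=0}^{p_1+p_2}S_{1,x_1}^{1,x_2,p_2}(p_1,l)\frac{(-1)^{l}\,l!}{(l+1)^{k}}.$$ *)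

From HB Require Import structures.
From mathcomp Require Import all_boot all_order all_algebra.
Set Implicit Arguments. Unset Strict Implicit. Unset Printing Implicit Defensive.
Import Order.TTheory GRing.Theory Num.Theory.
Local Open Scope ring_scope.

(* Generalized Stirling numbers
   S_{1,x1}^{1,x2,p2}(p1,l) = 1/l! sum_{j=0}^l (-1)^j C(l,j) (l-j+x1)^p1 (l-j+x2)^p2 *)
Definition gstirling (C : numClosedFieldType) (x1 x2 : C) (p2 p1 l : nat) : C :=
  (l`!%:R)^-1 * \sum_(j < l.+1)
     ((-1) ^+ j * 'C(l, j)%:R * ((l - j)%:R + x1) ^+ p1 * ((l - j)%:R + x2) ^+ p2).

Definition polyBernoulli2 (C : numClosedFieldType) (k : int) (p1 p2 : nat) (x1 x2 : C) : C :=
  \sum_(l < (p1 + p2).+1)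
     gstirling x1 x2 p2 p1 l * ((-1) ^+ l * l`!%:R / ((l.+1)%:R ^ k)).

Definition risingPoly (C : numClosedFieldType) (q : nat) : {poly C} :=
  \prod_(i < q) ('X + (i%:R)%:P).

From HB Require Import structures.
From mathcomp Require Import all_boot all_order all_algebra.
From mathcomp Require Import ring.
Import Order.TTheory GRing.Theory Num.Theory.
Set Implicit Arguments.
Unset Strict Implicit.
Unset Printing Implicit Defensive.

Local Open Scope ring_scope.

(* Write Δ_m g = Σ_{i ≤ m} (-1)^i C(m,i) g(i) (altdiff).  Reversing the inner sum of
   the Stirling number gives S(p1,m) = (-1)^m Δ_m f / m!  for f(i) = (i+x1)^p1 (i+x2)^p2,
   hence  B^{(k)}_{p1,p2}(x1,x2) = Σ_{m ≤ p1+p2} Δ_m f / (m+1)^k.  As Δ_m kills every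
   polynomial of degree < m, the range of m in such sums can be widened at will.

   In the first (resp. second) sum of the proposition the l-th Bernoulli polynomial is
   built on f(i) (i+x1)^l (resp. f(i) (i+x2)^l).  Widening all ranges to p1+p2+q,
   exchanging the sums and using linearity of Δ_m, Taylor's formula
       Σ_l (-1)^l R^{(l)}(x)/l! (i+x)^l = R(-i)     (R = rising factorial of length q)
   collapses both sums to  Σ_m Δ_m[f ⋅ R(-·)] / (m+1)^k.  Finally R(-i) is a signed
   falling factorial vanishing for i < q, which kills the terms m < q and turns
   Δ_{q+l}[f ⋅ R(-·)] into (q+l)^_q Δ_l f(· + q): this is the right-hand side. *)

Section AlternatingDifference.
Variable R : comPzRingType.

(* The alternating binomial difference Σ_{i ≤ m} (-1)^i C(m,i) g(i), i.e. the
   m-th forward difference of g at 0 up to the sign (-1)^m. *)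
Definition altdiff (m : nat) (g : nat -> R) : R :=
  \sum_(i < m.+1) (-1) ^+ i * 'C(m, i)%:R * g i.

Lemma eq_altdiff m (g h : nat -> R) :
  (forall i, g i = h i) -> altdiff m g = altdiff m h.
Proof. by move=> eq_gh; apply: eq_bigr => i _; rewrite eq_gh. Qed.

Lemma altdiffB m (g h : nat -> R) :
  altdiff m g - altdiff m h = altdiff m (fun i => g i - h i).
Proof. by rewrite /altdiff -sumrB; apply: eq_bigr => i _; rewrite mulrBr. Qed.

Lemma altdiff_sum n m (a : nat -> R) (g : nat -> nat -> R) :
  \sum_(l < n) a l * altdiff m (g l) = altdiff m (fun i => \sum_(l < n) a l * g l i).
Proof.
rewrite /altdiff; under eq_bigr do rewrite big_distrr.
rewrite exchange_big; apply: eq_bigr => i _ /=; rewrite big_distrr.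
by apply: eq_bigr => l _; rewrite /= mulrCA !mulrA.
Qed.

(* Pascal's rule: Δ_{m+1} g = Δ_m g - Δ_m (g ∘ succ). *)
Lemma altdiffS m (g : nat -> R) :
  altdiff m.+1 g = altdiff m g - altdiff m (fun i => g i.+1).
Proof.
rewrite /altdiff big_ord_recl /= expr0 bin0 mul1r.
under eq_bigr => i _ do rewrite /bump /= binS natrD mulrDr mulrDl.
rewrite big_split /= addrA; congr (_ + _).
  rewrite [in RHS]big_ord_recl /= expr0 bin0 mul1r; congr (_ + _).
  rewrite [in LHS]big_ord_recr /= bin_small // mulr0 mul0r addr0.
  by apply: eq_bigr => i _; rewrite add1n.
rewrite -sumrN; apply: eq_bigr => i _; rewrite exprS add1n; ring.
Qed.

End AlternatingDifference.

Section DifferencesOfPolynomials.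
Variable R : idomainType.

Lemma size_forward_difference (f : {poly R}) :
  (size (f \Po ('X + 1) - f)%R <= (size f).-1)%N.
Proof.
have size_X1 : size ('X + 1 : {poly R}) = 2 by rewrite -polyC1 size_XaddC.
have size_comp := size_comp_poly2 f size_X1.
apply/leq_sizeP => j le_j; rewrite coefB.
case: (ltngtP j (size f).-1) => [|lt_j|->]; first by rewrite ltnNge le_j.
  by rewrite !nth_default ?subrr ?size_comp //; case: (size f) lt_j => // *; exact: ltnW.
have lead_X1 : lead_coef ('X + 1 : {poly R}) = 1 by rewrite -polyC1 lead_coefXaddC.
have := @lead_coef_comp _ f ('X + 1); rewrite size_X1 lead_X1 expr1n mulr1.
by rewrite /lead_coef size_comp => ->; rewrite ?subrr.
Qed.

Lemma altdiff_poly_small m (f : {poly R}) :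
  (size f <= m)%N -> altdiff m (fun i => f.[i%:R]) = 0.
Proof.
elim: m f => [|m IH] f size_f.
  move: size_f; rewrite leqn0 size_poly_eq0 => /eqP ->.
  by rewrite /altdiff big1 // => i _; rewrite horner0 mulr0.
rewrite altdiffS altdiffB.
have -> : altdiff m (fun i => f.[i%:R] - f.[i.+1%:R]) =
          - altdiff m (fun i => (f \Po ('X + 1) - f).[i%:R]).
  rewrite /altdiff -sumrN; apply: eq_bigr => i _.
  by rewrite !hornerE horner_comp !hornerE -natr1; ring.
rewrite IH ?oppr0 //; apply: leq_trans (size_forward_difference f) _.
by case: (size f) size_f.
Qed.

Lemma altdiff_sum_widen (u : nat -> R) (f : {poly R}) n N :
  (size f <= n)%N -> (n <= N)%N ->
  \sum_(m < n) altdiff m (fun i => f.[i%:R]) * u m =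
  \sum_(m < N) altdiff m (fun i => f.[i%:R]) * u m.
Proof.
move=> size_f le_nN.
rewrite (big_ord_widen N (fun m => altdiff m (fun i => f.[i%:R]) * u m) le_nN).
rewrite big_mkcond; apply: eq_bigr => m _; case: ifP => // /negbT.
by rewrite -leqNgt => le_nm; rewrite altdiff_poly_small ?mul0r // (leq_trans size_f).
Qed.

End DifferencesOfPolynomials.

Lemma ffactnD (n a b : nat) : (n ^_ (a + b) = n ^_ a * (n - a) ^_ b)%N.
Proof.
elim: b => [|b IH]; first by rewrite addn0 ffactn0 muln1.
by rewrite addnS !ffactnSr IH subnDA mulnA.
Qed.

(* C(q+l, i+q) ⋅ (i+q)^_q = (q+l)^_q ⋅ C(l, i): both sides times i! equal (q+l)^_(q+i). *)
Lemma bin_ffact_shift (q l i : nat) :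
  ('C(q + l, i + q) * (i + q) ^_ q = (q + l) ^_ q * 'C(l, i))%N.
Proof.
have fact_iq : ((i + q) ^_ q * i`! = (i + q)`!)%N.
  by rewrite -ffactnn -{2}(addnK q i) -ffactnD addnC ffactnn.
apply/eqP; rewrite -(eqn_pmul2r (fact_gt0 i)) -mulnA fact_iq bin_ffact.
by rewrite -mulnA bin_ffact [(i + q)%N]addnC ffactnD addKn.
Qed.

Section PolyBernoulliTaylor.
Variable C : numClosedFieldType.
Implicit Types (x y : C) (k : int).

Definition pbWeight k (m : nat) : C := ((m.+1)%:R ^ k)^-1.

Definition pbPoly (x1 x2 : C) (a b : nat) : {poly C} :=
  ('X + x1%:P) ^+ a * ('X + x2%:P) ^+ b.

Lemma horner_pbPoly (x1 x2 : C) a b y :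
  (pbPoly x1 x2 a b).[y] = (y + x1) ^+ a * (y + x2) ^+ b.
Proof. by rewrite /pbPoly hornerM !hornerE. Qed.

Lemma size_pbPoly (x1 x2 : C) a b : (size (pbPoly x1 x2 a b) <= (a + b).+1)%N.
Proof.
have size_pow n y : size (('X + y%:P) ^+ n : {poly C}) = n.+1.
  by rewrite -[y]opprK polyCN size_exp_XsubC.
by apply: leq_trans (size_polyMleq _ _) _; rewrite !size_pow addSn addnS.
Qed.

Lemma signr_subn (l i : nat) : (i <= l)%N ->
  (-1) ^+ (l - i) = (-1) ^+ l * (-1) ^+ i :> C.
Proof.
by move=> le_il; rewrite -{2}(subnK le_il) exprD -mulrA -expr2 sqrr_sign mulr1.
Qed.

Lemma gstirling_altdiff (x1 x2 : C) p2 p1 l :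
  gstirling x1 x2 p2 p1 l = (l`!%:R)^-1 *
    ((-1) ^+ l * altdiff l (fun i => (pbPoly x1 x2 p1 p2).[i%:R])).
Proof.
rewrite /gstirling; congr (_ * _); rewrite /altdiff big_distrr.
rewrite (reindex_inj rev_ord_inj) /=; apply: eq_bigr => i _.
have le_il : (i <= l)%N by rewrite -ltnS.
by rewrite horner_pbPoly subSS subKn // bin_sub // signr_subn //; ring.
Qed.

Lemma polyBernoulli2_altdiff k p1 p2 (x1 x2 : C) :
  polyBernoulli2 k p1 p2 x1 x2 = \sum_(m < (p1 + p2).+1)
     altdiff m (fun i => (pbPoly x1 x2 p1 p2).[i%:R]) * pbWeight k m.
Proof.
apply: eq_bigr => m _; rewrite gstirling_altdiff /pbWeight.
have fact_neq0 : (m`!%:R : C) != 0 by rewrite pnatr_eq0 -lt0n fact_gt0.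
set D := altdiff _ _; set a := (m`!%:R : C); set Y := _ ^ k.
transitivity ((-1) ^+ m ^+ 2 * (a^-1 * a) * (D / Y)); first by ring.
by rewrite sqrr_sign mulVf // !mul1r.
Qed.

Lemma risingPoly_neg_nat q n :
  (risingPoly C q).[- n%:R] = (-1) ^+ q * (n ^_ q)%:R.
Proof.
rewrite /risingPoly; elim: q => [|q IH].
  by rewrite big_ord0 hornerC expr0 mul1r ffactn0.
rewrite big_ord_recr /= hornerM IH !hornerE ffactnSr.
have [le_qn|lt_nq] := leqP q n; first by rewrite natrM natrB // exprS; ring.
by rewrite ffact_small // !(mul0r, mulr0).
Qed.

Lemma size_risingPoly q : (size (risingPoly C q) <= q.+1)%N.
Proof.
rewrite /risingPoly; elim: q => [|q IH]; first by rewrite big_ord0 size_poly1.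
rewrite big_ord_recr /=; apply: leq_trans (size_polyMleq _ _) _.
by rewrite size_XaddC addn2.
Qed.

(* Taylor expansion of R_q around x, evaluated at x - (i + x) = -i. *)
Lemma taylor_risingPoly q x (i : nat) :
  \sum_(l < q.+1) (-1) ^+ l * ((l`!%:R)^-1 * ((risingPoly C q)^`(l)).[x]) *
      (i%:R + x) ^+ l
  = (risingPoly C q).[- i%:R].
Proof.
have -> : - i%:R = x + (- (i%:R + x)) by ring.
rewrite (nderiv_taylor_wide _ (size_risingPoly q)); last exact: mulrC.
apply: eq_bigr => l _; have fact_neq0 : (l`!%:R : C) != 0.
  by rewrite pnatr_eq0 -lt0n fact_gt0.
rewrite nderivn_def hornerMn; set r := (risingPoly C q)^`N(l).[x].
rewrite -[r *+ _]mulr_natr [in RHS]exprNn; field; exact: fact_neq0.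
Qed.

Lemma taylor_collapse (u : nat -> C) p q x (E : nat -> C) (G : nat -> {poly C}) :
  (forall l, size (G l) <= (p + l).+1)%N ->
  (forall l (i : nat), (G l).[i%:R] = E i * (i%:R + x) ^+ l) ->
  \sum_(l < q.+1) (-1) ^+ l *
     (\sum_(m < (p + l).+1) altdiff m (fun i => (G l).[i%:R]) * u m) *
     ((l`!%:R)^-1 * ((risingPoly C q)^`(l)).[x])
  = \sum_(m < (p + q).+1)
      altdiff m (fun i => E i * (risingPoly C q).[- i%:R]) * u m.
Proof.
move=> size_G horner_G.
under eq_bigr => l _.
  rewrite (altdiff_sum_widen u (size_G l) (_ : (p + l).+1 <= (p + q).+1)%N); last first.
    by rewrite ltnS leq_add2l -ltnS.
  rewrite mulrAC big_distrr /=.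
  over.
rewrite exchange_big; apply: eq_bigr => m _ /=.
under eq_bigr do rewrite mulrA.
rewrite -big_distrl /= (altdiff_sum _ _
  (fun l => (-1) ^+ l * ((l`!%:R)^-1 * ((risingPoly C q)^`(l)).[x]))
  (fun l i => (G l).[i%:R])).
congr (_ * _); apply: eq_altdiff => i.
under eq_bigr do rewrite horner_G mulrCA.
by rewrite -big_distrr taylor_risingPoly.
Qed.

Lemma altdiff_rising_low q m (E : nat -> C) : (m < q)%N ->
  altdiff m (fun i => E i * (risingPoly C q).[- i%:R]) = 0.
Proof.
move=> lt_mq; rewrite /altdiff big1 // => i _.
by rewrite risingPoly_neg_nat ffact_small ?mulr0 // (leq_trans (ltn_ord i)).
Qed.

Lemma altdiff_rising_shift q l (E : nat -> C) :
  altdiff (q + l) (fun i => E i * (risingPoly C q).[- i%:R]) =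
  ((q + l) ^_ q)%:R * altdiff l (fun i => E (i + q)%N).
Proof.
rewrite /altdiff -addnS big_split_ord /= big1 ?add0r; last first.
  by move=> i _; rewrite risingPoly_neg_nat ffact_small ?mulr0.
rewrite big_distrr; apply: eq_bigr => i _ /=.
have := congr1 (fun n => n%:R : C) (bin_ffact_shift q l i); rewrite /= !natrM => bin_eq.
rewrite risingPoly_neg_nat [(q + i)%N]addnC exprD.
transitivity ((-1) ^+ q ^+ 2 * ((-1) ^+ i *
   ('C(q + l, i + q)%:R * ((i + q) ^_ q)%:R) * E (i + q)%N)); first by ring.
by rewrite sqrr_sign mul1r bin_eq; ring.
Qed.

Lemma collapsed_sum_shift k p1 p2 q (x1 x2 : C) :
  \sum_(m < (p1 + p2 + q).+1)
     altdiff m (fun i => (pbPoly x1 x2 p1 p2).[i%:R] * (risingPoly C q).[- i%:R])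
     * pbWeight k m
  = \sum_(l < (p1 + p2).+1)
      gstirling (x1 + q%:R) (x2 + q%:R) p2 p1 l
      * ((-1) ^+ l * (l + q)`!%:R / (((l + q).+1)%:R ^ k)).
Proof.
rewrite -addSn addnC big_split_ord /= big1 ?add0r; last first.
  by move=> m _; rewrite altdiff_rising_low ?mul0r.
apply: eq_bigr => l _ /=; rewrite altdiff_rising_shift gstirling_altdiff /pbWeight.
have shift_poly : forall i : nat, (pbPoly x1 x2 p1 p2).[(i + q)%N%:R] =
    (pbPoly (x1 + q%:R) (x2 + q%:R) p1 p2).[i%:R].
  by move=> i; rewrite !horner_pbPoly natrD !addrA [_ + x1]addrAC [_ + x2]addrAC.
rewrite (eq_altdiff _ shift_poly).
have fact_neq0 : (l`!%:R : C) != 0 by rewrite pnatr_eq0 -lt0n fact_gt0.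
have fact_lq : ((l + q)`!%:R : C) = ((q + l) ^_ q)%:R * l`!%:R.
  by rewrite -natrM -{3}(addKn q l) ffact_fact ?leq_addr // addnC.
rewrite fact_lq (addnC l q); set D := altdiff _ _; set Y := _ ^ k; set a := (l`!%:R : C).
transitivity ((-1) ^+ l ^+ 2 * (a^-1 * a) * (((q + l) ^_ q)%:R * D / Y)).
  by rewrite sqrr_sign mulVf // !mul1r.
by ring.
Qed.

End PolyBernoulliTaylor.

Theorem proposition4p1 (C : numClosedFieldType) (p1 p2 q : nat) (k : int) (x1 x2 : C) :
  (\sum_(l < q.+1)
      (-1) ^+ l * polyBernoulli2 k (p1 + l) p2 x1 x2
      * ((l`!%:R)^-1 * ((risingPoly C q)^`(l)).[x1])
   = \sum_(l < q.+1)
      (-1) ^+ l * polyBernoulli2 k p1 (p2 + l) x1 x2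
      * ((l`!%:R)^-1 * ((risingPoly C q)^`(l)).[x2]))
  /\
  (\sum_(l < q.+1)
      (-1) ^+ l * polyBernoulli2 k p1 (p2 + l) x1 x2
      * ((l`!%:R)^-1 * ((risingPoly C q)^`(l)).[x2])
   = \sum_(l < (p1 + p2).+1)
      gstirling (x1 + q%:R) (x2 + q%:R) p2 p1 l
      * ((-1) ^+ l * (l + q)`!%:R / (((l + q).+1)%:R ^ k))).
Proof.
pose E i := (pbPoly x1 x2 p1 p2).[i%:R].
have collapse_x1 : \sum_(l < q.+1) (-1) ^+ l * polyBernoulli2 k (p1 + l) p2 x1 x2
      * ((l`!%:R)^-1 * ((risingPoly C q)^`(l)).[x1]) = \sum_(m < (p1 + p2 + q).+1)
      altdiff m (fun i => E i * (risingPoly C q).[- i%:R]) * pbWeight C k m.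
  rewrite -(@taylor_collapse C (pbWeight C k) (p1 + p2) q x1 E
    (fun l => pbPoly x1 x2 (p1 + l) p2)).
  - by apply: eq_bigr => l _; rewrite polyBernoulli2_altdiff addnAC.
  - by move=> l; rewrite addnAC size_pbPoly.
  - by move=> l i; rewrite /E !horner_pbPoly exprD mulrAC.
have collapse_x2 : \sum_(l < q.+1) (-1) ^+ l * polyBernoulli2 k p1 (p2 + l) x1 x2
      * ((l`!%:R)^-1 * ((risingPoly C q)^`(l)).[x2]) = \sum_(m < (p1 + p2 + q).+1)
      altdiff m (fun i => E i * (risingPoly C q).[- i%:R]) * pbWeight C k m.
  rewrite -(@taylor_collapse C (pbWeight C k) (p1 + p2) q x2 E
    (fun l => pbPoly x1 x2 p1 (p2 + l))).
  - by apply: eq_bigr => l _; rewrite polyBernoulli2_altdiff addnA.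
  - by move=> l; rewrite -addnA size_pbPoly.
  - by move=> l i; rewrite /E !horner_pbPoly exprD mulrA.
by rewrite collapse_x1 collapse_x2 collapsed_sum_shift.
Qed.
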